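(* Let $m\ge 2$ and let $n_1,\dots,n_m\ge 5$ be odd. Then the strong metric dimension of the odd chain cycle satisfies $$sdim(\mathcal{C}(C_{n_1},\dots,C_{n_m}))=m-1+\left\lfloor\frac{n_1}{2}\right\rfloor+\left\lfloor\frac{n_m}{2}\right\rfloor+\sum_{i=2}^{m-1}\left\lfloor\frac{n_i-2}{2}\right\rfloor.$$
   Context: Let $C_{n_1},\dots,C_{n_m}$ be pairwise disjoint cycles, $V(C_{n_i})=\{v^i_1,\dots,v^i_{n_i}\}$ with $v^i_j$ adjacent to $v^i_{j+1}$ (indices mod $n_i$). The odd chain cycle (all $n_i$ odd) is obtained by identifying $v^i_{(n_i+1)/2+1}$ with $v^{i+1}_1$ for $i=1,\dots,m-1$. A vertex $w$ strongly resolves distinct vertices $u,v$ if $u$ lies on some shortest $v$–$w$ path or $v$ lies on some shortest $u$–$w$ path. A set $W\subseteq V(G)$ is a strong resolving set if every pair of distinct vertices is strongly resolved by some $w\in W$; $sdim(G)$ is the minimum size of a strong resolving set. *)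

From mathcomp Require Import all_boot.
Set Implicit Arguments. Unset Strict Implicit. Unset Printing Implicit Defensive.

Definition shortest_path (T : finType) (adj : rel T) (u v : T) (p : seq T) : Prop :=
  [/\ path adj u p, last u p = v &
      forall q : seq T, path adj u q -> last u q = v -> size p <= size q].

Definition strongly_resolves (T : finType) (adj : rel T) (w u v : T) : Prop :=
  (exists p, shortest_path adj v w p /\ u \in v :: p) \/
  (exists p, shortest_path adj u w p /\ v \in u :: p).

Definition strong_resolving_set (T : finType) (adj : rel T) (W : {set T}) : Prop :=
  forall u v : T, u != v -> exists2 w, w \in W & strongly_resolves adj w u v.

Definition is_sdim (T : finType) (adj : rel T) (k : nat) : Prop :=
  (exists W : {set T}, strong_resolving_set adj W /\ #|W| = k) /\
  (forall W : {set T}, strong_resolving_set adj W -> k <= #|W|).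

(* Cycles are 0-indexed i = 0..m-1 (paper: 1..m) with lengths n i;
   vertex v^{i+1}_{j+1} of the paper is the raw vertex (i, j), j < n i.
   The paper identifies v^i_{(n_i+1)/2+1} with v^{i+1}_1, i.e. raw
   (i, (n i + 1)/2) with raw (i+1, 0).  The canonical representative of each
   class is the one that is not of the form (i, 0) with i > 0. *)

Definition chainK (m : nat) (n : nat -> nat) : nat := \max_(i < m) n i.

Definition raw_vert (m : nat) (n : nat -> nat) := ('I_m * 'I_(chainK m n))%type.

Definition raw_valid m n (a : raw_vert m n) : bool := a.2 < n a.1.

Definition canonical_vert m n (a : raw_vert m n) : bool :=
  raw_valid a && ~~ ((0 < a.1) && (a.2 == 0 :> nat)).

Definition ident m n (a b : raw_vert m n) : bool :=
  [&& (b.1 == a.1.+1 :> nat), (a.2 == (n a.1).+1./2 :> nat) & (b.2 == 0 :> nat)].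

Definition same_vert m n (a b : raw_vert m n) : bool :=
  [|| a == b, ident a b | ident b a].

Definition raw_adj m n (a b : raw_vert m n) : bool :=
  [&& a.1 == b.1, raw_valid a, raw_valid b &
      (b.2 == (a.2 + 1) %% n a.1 :> nat) || (a.2 == (b.2 + 1) %% n a.1 :> nat)].

Definition chain_vert (m : nat) (n : nat -> nat) :=
  {a : raw_vert m n | canonical_vert a}.

Definition chain_adj m n : rel (chain_vert m n) :=
  fun x y => [exists a : raw_vert m n, exists b : raw_vert m n,
    [&& same_vert (val x) a, same_vert (val y) b & raw_adj a b]].

(* Strategy.  (1) On any finite graph whose distance is given by a function D
   that is symmetric, separates points, is 1-Lipschitz along edges and can be
   decreased along some edge, a set is strongly resolving iff it meets every
   pair of mutually maximally distant vertices (strong_resolving_setP).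
   (2) The distance of the odd chain cycle is computed explicitly on labels
   (i, p) = position p of cycle i (chain_dist) and shown to satisfy these
   hypotheses (chain_srsP).  (3) Its mutually maximally distant pairs are
   identified: antipodal positions of one cycle, and pairs in two cycles
   antipodal to the junctions between them (mmd_same_cycle,
   mmd_cross_cycles, not_maximally_distant).  (4) Lower bound: in each cycle
   W must meet disjoint antipodal pairs, and the cross pairs force one more
   vertex in all cycles but one (half_graph_cover); (5) upper bound: an
   explicit basis of the announced size meets every such pair. *)

From mathcomp Require Import all_boot zify.
Set Implicit Arguments. Unset Strict Implicit. Unset Printing Implicit Defensive.

(* Graph distances characterised by local conditions. *)
Section LocalDistance.

Variables (T : finType) (adj : rel T) (D : T -> T -> nat).

Hypothesis D_sym : forall x y, D x y = D y x.
Hypothesis D_refl : forall x, D x x = 0.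
Hypothesis D_eq0 : forall x y, D x y = 0 -> x = y.
Hypothesis D_adj : forall x z y, adj x z -> D x y <= (D z y).+1.
Hypothesis D_descent : forall x y, x != y -> exists2 z, adj x z & (D z y).+1 = D x y.

Lemma path_length_ge u p : path adj u p -> D u (last u p) <= size p.
Proof.
elim: p u => [|z p IHp] u /=; first by rewrite D_refl.
case/andP=> adj_uz /IHp; have := D_adj (last z p) adj_uz; lia.
Qed.

Lemma geodesic_exists u v : exists p, [/\ path adj u p, last u p = v & size p = D u v].
Proof.
have [d le_Dd] : exists d, D u v <= d by exists (D u v).
elim: d u le_Dd => [|d IHd] u le_Dd.
  have -> : u = v by apply: D_eq0; lia.
  by exists [::]; rewrite /= D_refl.
have [->|neq_uv] := eqVneq u v; first by exists [::]; rewrite /= D_refl.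
have [z adj_uz Dz] := D_descent neq_uv.
have [p [path_p last_p size_p]] := IHd z (ltac:(lia)).
by exists (z :: p); rewrite /= adj_uz path_p last_p size_p.
Qed.

Lemma shortest_pathE u v p :
  shortest_path adj u v p <-> [/\ path adj u p, last u p = v & size p = D u v].
Proof.
split=> [[path_p last_p min_p]|[path_p last_p size_p]].
  have [q [path_q last_q size_q]] := geodesic_exists u v.
  have := min_p q path_q last_q; have := path_length_ge path_p.
  by rewrite last_p; split=> //; lia.
split=> // q path_q last_q; have := path_length_ge path_q; rewrite last_q; lia.
Qed.

Lemma D_triangle x y z : D x z <= D x y + D y z.
Proof.
have [p [path_p last_p size_p]] := geodesic_exists x y.
have [q [path_q last_q size_q]] := geodesic_exists y z.
have := @path_length_ge x (p ++ q).
rewrite cat_path path_p last_p path_q last_cat last_p last_q size_cat; lia.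
Qed.

Lemma D_adj_r x z y : adj x z -> D z y <= (D x y).+1.
Proof.
move=> adj_xz; have := D_adj z adj_xz; have := D_triangle z x y.
rewrite D_refl (D_sym z x); lia.
Qed.

Definition between x y z := D x y + D y z == D x z.

Lemma betweenC x y z : between x y z = between z y x.
Proof. by rewrite /between addnC (D_sym x y) (D_sym y z) (D_sym x z). Qed.

Lemma path_through_length v p u :
  path adj v p -> u \in v :: p -> D v u + D u (last v p) <= size p.
Proof.
elim: p v => [|z p IHp] v /=; first by move=> _; rewrite inE => /eqP ->; rewrite D_refl.
case/andP=> adj_vz path_p; rewrite inE => /orP [/eqP ->|u_p].
  rewrite D_refl; have := path_length_ge path_p; have := D_adj (last z p) adj_vz; lia.
have := IHp z path_p u_p; have := D_adj u adj_vz; lia.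
Qed.

Lemma on_shortest_pathE w u v :
  (exists p, shortest_path adj v w p /\ u \in v :: p) <-> between v u w.
Proof.
split=> [[p [/shortest_pathE [path_p last_p size_p] u_p]]|/eqP bet].
  have := path_through_length path_p u_p; have := D_triangle v u w.
  rewrite last_p size_p /between; lia.
have [p [path_p last_p size_p]] := geodesic_exists v u.
have [q [path_q last_q size_q]] := geodesic_exists u w.
exists (p ++ q); split.
  apply/shortest_pathE; rewrite cat_path path_p last_p path_q last_cat last_p.
  by rewrite size_cat size_p size_q bet.
have : u \in v :: p by rewrite -last_p mem_last.
by rewrite !inE mem_cat => /orP [->|->]; rewrite ?orbT.
Qed.

Lemma strongly_resolvesE w u v :
  strongly_resolves adj w u v <-> between v u w || between u v w.
Proof.
by rewrite /strongly_resolves !on_shortest_pathE; apply: rwP orP.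
Qed.

Definition maximally_distant x y := forall z, adj x z -> D z y <= D x y.

Definition mutually_maximally_distant x y :=
  maximally_distant x y /\ maximally_distant y x.

Lemma maximally_distant_between x y w :
  maximally_distant x y -> between y x w -> w = x.
Proof.
move=> max_x /eqP bet; apply/eqP; apply/negPn/negP => neq_wx.
have [z adj_xz Dz] := @D_descent x w (ltac:(by rewrite eq_sym)).
have := max_x z adj_xz; have := D_triangle y z w.
rewrite (D_sym z y) (D_sym x y); lia.
Qed.

Lemma mmd_resolvers x y w :
  mutually_maximally_distant x y -> strongly_resolves adj w x y -> w = x \/ w = y.
Proof.
case=> max_x max_y /strongly_resolvesE /orP [] bet.
  by left; apply: maximally_distant_between max_x bet.
by right; apply: maximally_distant_between max_y bet.
Qed.

Lemma between_extend b a c z :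
  between b a c -> adj c z -> D b z = (D b c).+1 -> between b a z.
Proof.
move=> /eqP bet adj_cz Dz; have := D_adj_r a adj_cz.
have := D_triangle b a z; rewrite /between (D_sym z) (D_sym c); lia.
Qed.

Lemma between_shift x u v y : between x u v -> between x v y -> between u v y.
Proof.
move=> /eqP bet_xuv /eqP bet_xvy.
have := D_triangle x u y; have := D_triangle u v y; rewrite /between; lia.
Qed.

(* Every pair u, v is strongly resolved by both ends of some mutually
   maximally distant pair: extend a geodesic v..u maximally beyond u to x,
   then a geodesic x..v maximally beyond v to y. *)
Lemma mmd_pair_resolving u v : u != v -> exists x y,
  [/\ x != y, mutually_maximally_distant x y, between v u x & between u v y].
Proof.
move=> neq_uv.
have [x bet_vux max_x] :=
  @arg_maxnP T u (between v u) (D v) (ltac:(by rewrite /between D_refl addn0)).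
have [y bet_xvy max_y] :=
  @arg_maxnP T v (between x v) (D x) (ltac:(by rewrite /between D_refl addn0)).
have bet_uvy : between u v y by apply: between_shift bet_xvy; rewrite betweenC.
exists x, y; split=> //.
- apply/eqP => eq_xy; apply: (negP neq_uv); apply/eqP/D_eq0.
  by move: bet_vux bet_uvy; rewrite -eq_xy /between (D_sym u v); lia.
- split=> z adj_z; rewrite leqNgt; apply/negP => far_z.
    have Dyz : D y z = (D y x).+1.
      by move: far_z; have := D_adj_r y adj_z; rewrite (D_sym z) (D_sym x); lia.
    have bet_yvz : between y v z.
      by apply: between_extend adj_z Dyz; rewrite betweenC.
    have Dvz : D v z = (D v x).+1.
      by move: bet_yvz bet_xvy; rewrite /between Dyz (D_sym x y) (D_sym x v) (D_sym v y); lia.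
    have := max_x z (between_extend bet_vux adj_z Dvz); lia.
  have Dxz : D x z = (D x y).+1.
    by move: far_z; have := D_adj_r x adj_z; rewrite (D_sym z) (D_sym y); lia.
  have := max_y z (between_extend bet_xvy adj_z Dxz); lia.
Qed.

Theorem strong_resolving_setP (W : {set T}) : strong_resolving_set adj W <->
  (forall x y, x != y -> mutually_maximally_distant x y -> (x \in W) || (y \in W)).
Proof.
split=> [W_srs x y neq_xy mmd_xy|cover_W u v neq_uv].
  have [w w_W res_w] := W_srs x y neq_xy.
  by case: (mmd_resolvers mmd_xy res_w) => <-; rewrite w_W ?orbT.
have [x [y [neq_xy mmd_xy bet_vux bet_uvy]]] := mmd_pair_resolving neq_uv.
case/orP: (cover_W x y neq_xy mmd_xy) => [x_W|y_W].
  by exists x => //; apply/strongly_resolvesE; rewrite bet_vux.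
by exists y => //; apply/strongly_resolvesE; rewrite bet_uvy orbT.
Qed.

End LocalDistance.

Definition cycle_adj (N p q : nat) := (q == (p + 1) %% N) || (p == (q + 1) %% N).

Definition cycle_dist (N p q : nat) := minn (p - q + (q - p)) (N - (p - q + (q - p))).

Lemma cycle_adjE N p q : p < N -> q < N -> cycle_adj N p q =
  [|| q == p.+1, p == q.+1, (p.+1 == N) && (q == 0) | (q.+1 == N) && (p == 0)].
Proof.
have succE r : r < N -> (r + 1) %% N = if r.+1 == N then 0 else r.+1.
  move=> lt_rN; case: eqP => [<-|ne_rN]; first by rewrite addn1 modnn.
  by rewrite modn_small; lia.
move=> lt_pN lt_qN; rewrite /cycle_adj !succE //.
by case: (eqVneq p.+1 N); case: (eqVneq q.+1 N) => /=; lia.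
Qed.

Lemma cycle_distC N p q : cycle_dist N p q = cycle_dist N q p.
Proof. rewrite /cycle_dist; lia. Qed.

Lemma cycle_dist_refl N p : cycle_dist N p p = 0.
Proof. by rewrite /cycle_dist subnn min0n. Qed.

Section OddCycle.

Variables (N k : nat).
Hypothesis N_odd : N = 2 * k + 1.

Lemma cycle_dist_le p q : p < N -> q < N -> cycle_dist N p q <= k.
Proof. rewrite /cycle_dist; lia. Qed.

Lemma cycle_dist_eq0 p q : p < N -> q < N -> cycle_dist N p q = 0 -> p = q.
Proof. rewrite /cycle_dist; lia. Qed.

Lemma cycle_dist_adj p p' q : p < N -> p' < N -> q < N -> cycle_adj N p p' ->
  cycle_dist N p q <= (cycle_dist N p' q).+1.
Proof. by move=> lt_pN lt_p'N lt_qN; rewrite cycle_adjE // /cycle_dist; lia. Qed.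

Lemma cycle_dist_descent p q : p < N -> q < N -> p != q ->
  exists p', [/\ p' < N, cycle_adj N p p' & (cycle_dist N p' q).+1 = cycle_dist N p q].
Proof.
move=> lt_pN lt_qN neq_pq; rewrite /cycle_dist.
case: (ltngtP p q) => [lt_pq|lt_qp|eq_pq]; last by rewrite eq_pq eqxx in neq_pq.
- case: (leqP (q - p) k) => short.
    by exists p.+1; rewrite cycle_adjE; first [by split; lia | lia].
  case: p lt_pN neq_pq lt_pq short => [|p] lt_pN neq_pq lt_pq short.
    by exists N.-1; rewrite cycle_adjE; first [by split; lia | lia].
  by exists p; rewrite cycle_adjE; first [by split; lia | lia].
- case: (leqP (p - q) k) => short.
    case: p lt_pN neq_pq lt_qp short => [|p] lt_pN neq_pq lt_qp short; first lia.
    by exists p; rewrite cycle_adjE; first [by split; lia | lia].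
  case: (ltnP p.+1 N) => lt_p1N.
    by exists p.+1; rewrite cycle_adjE; first [by split; lia | lia].
  by exists 0; rewrite cycle_adjE; first [by split; lia | lia].
Qed.

End OddCycle.

(* Cycle i is attached to cycle i+1 at its gate, position
   rad i + 1, which is identified with position 0 of cycle i+1. *)
Section ChainLabels.

Variables (m : nat) (n : nat -> nat).
Hypothesis n_odd : forall i, i < m -> odd (n i) /\ 5 <= n i.

Definition rad i := (n i)./2.

Definition gate i := (rad i).+1.

(* Distance from position 0 of cycle i+1 to position 0 of cycle j. *)
Definition chain_span i j := \sum_(i.+1 <= l < j) rad l.

(* Distance from position p of cycle i to position q of cycle j: a path
   between different cycles passes through all the gates between them. *)
Definition chain_dist (i p j q : nat) : nat :=
  if i == j then cycle_dist (n i) p q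
  else if i < j then cycle_dist (n i) p (gate i) + chain_span i j + cycle_dist (n j) 0 q
  else cycle_dist (n j) q (gate j) + chain_span j i + cycle_dist (n i) 0 p.

(* Labels of vertices: position 0 of a cycle i > 0 is the gate of cycle i-1
   and is labelled as such. *)
Definition canon_label i p := [&& i < m, p < n i & ~~ ((0 < i) && (p == 0))].

Lemma canon_labelI i p : i < m -> p < n i -> (0 < i -> 0 < p) -> canon_label i p.
Proof. by move=> lt_im lt_pi pos_p; rewrite /canon_label lt_im lt_pi /=; lia. Qed.

Lemma n_rad i : i < m -> n i = 2 * rad i + 1 /\ 2 <= rad i.
Proof.
move=> /n_odd [odd_n ge5_n]; have := odd_double_half (n i).
by rewrite odd_n /rad -muln2; lia.
Qed.

Lemma gateE i : i < m -> (n i).+1./2 = gate i.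
Proof.
move=> /n_rad [-> _]; have -> : (2 * rad i + 1).+1 = (rad i).+1.*2 by lia.
by rewrite doubleK.
Qed.

Lemma gate_lt i : i < m -> gate i < n i.
Proof. by move=> /n_rad [-> ge2_rad]; rewrite /gate; lia. Qed.

Lemma n_gt0 i : i < m -> 0 < n i.
Proof. by move=> /n_rad [-> _]; rewrite addn1. Qed.

Lemma cycle_dist_gate i : i < m -> cycle_dist (n i) 0 (gate i) = rad i.
Proof. by move=> /n_rad [-> _]; rewrite /cycle_dist /gate; lia. Qed.

Lemma chain_span_nil i : chain_span i i.+1 = 0.
Proof. by rewrite /chain_span big_geq. Qed.

Lemma chain_span_cons i j : i.+1 < j -> chain_span i j = rad i.+1 + chain_span i.+1 j.
Proof. by move=> lt_i1j; rewrite /chain_span big_ltn. Qed.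

Lemma chain_span_rcons i j : i.+1 <= j -> chain_span i j.+1 = chain_span i j + rad j.
Proof. by move=> le_i1j; rewrite /chain_span big_nat_recr. Qed.

Lemma chain_distC i p j q : chain_dist i p j q = chain_dist j q i p.
Proof.
by rewrite /chain_dist eq_sym; case: (ltngtP i j) => // <-; rewrite cycle_distC.
Qed.

Lemma chain_dist_refl i p : chain_dist i p i p = 0.
Proof. by rewrite /chain_dist eqxx cycle_dist_refl. Qed.

Lemma chain_dist_gate l j q : l.+1 < m -> j < m -> q < n j ->
  chain_dist l (gate l) j q = chain_dist l.+1 0 j q.
Proof.
move=> lt_l1m lt_jm lt_qj.
have rad_l := cycle_dist_gate (ltnW lt_l1m); have rad_l1 := cycle_dist_gate lt_l1m.
rewrite /chain_dist !cycle_dist_refl.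
case: (ltngtP l j) => [lt_lj|gt_lj|eq_lj]; case: (ltngtP l.+1 j) => [lt_l1j|gt_l1j|eq_l1j];
  try lia.
- by rewrite (@chain_span_cons l j) //; lia.
- by rewrite -eq_l1j chain_span_nil; lia.
- by rewrite chain_span_rcons; lia.
- by rewrite -eq_lj chain_span_nil cycle_distC; lia.
Qed.

Lemma chain_dist_adj l p p' j q : l < m -> p < n l -> p' < n l -> cycle_adj (n l) p p' ->
  j < m -> q < n j -> chain_dist l p j q <= (chain_dist l p' j q).+1.
Proof.
move=> lt_lm lt_pl lt_p'l adj_pp' lt_jm lt_qj.
have [n_l _] := n_rad lt_lm; have lt_gate := gate_lt lt_lm.
rewrite /chain_dist; case: (ltngtP l j) => [lt_lj|lt_jl|eq_lj].
- by have := cycle_dist_adj n_l lt_pl lt_p'l lt_gate adj_pp'; lia.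
- rewrite (cycle_distC _ 0 p) (cycle_distC _ 0 p').
  by have := cycle_dist_adj n_l lt_pl lt_p'l (n_gt0 lt_lm) adj_pp'; lia.
- by rewrite -eq_lj in lt_qj; apply: (cycle_dist_adj n_l).
Qed.

Lemma chain_dist_eq0 i p j q : canon_label i p -> canon_label j q ->
  chain_dist i p j q = 0 -> i = j /\ p = q.
Proof.
case/and3P=> lt_im lt_pi canon_p /and3P [lt_jm lt_qj canon_q].
have [n_i _] := n_rad lt_im; have [n_j _] := n_rad lt_jm.
rewrite /chain_dist; case: (ltngtP i j) => [lt_ij|lt_ji|eq_ij] D0.
- have q0 : q = 0 by apply/esym/(cycle_dist_eq0 n_j (n_gt0 lt_jm) lt_qj); lia.
  by move: canon_q; rewrite q0; lia.
- have p0 : p = 0 by apply/esym/(cycle_dist_eq0 n_i (n_gt0 lt_im) lt_pi); lia.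
  by move: canon_p; rewrite p0; lia.
- by split=> //; apply: (cycle_dist_eq0 n_i) => //; rewrite eq_ij.
Qed.

Lemma chain_dist_descent i p j q : canon_label i p -> j < m -> q < n j ->
  0 < chain_dist i p j q ->
  (exists p', [/\ p' < n i, cycle_adj (n i) p p' &
                  (chain_dist i p' j q).+1 = chain_dist i p j q]) \/
  [/\ i.+1 < m, p = gate i & exists p', [/\ p' < n i.+1, cycle_adj (n i.+1) 0 p' &
                  (chain_dist i.+1 p' j q).+1 = chain_dist i p j q]].
Proof.
case/and3P=> lt_im lt_pi canon_p lt_jm lt_qj.
have [n_i _] := n_rad lt_im; have lt_gate := gate_lt lt_im.
rewrite /chain_dist; case: (ltngtP i j) => [lt_ij|lt_ji|eq_ij].
- have [->|neq_pg] := eqVneq p (gate i) => D_gt0; last first.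
    left; have [p' [lt_p'i adj_pp' Dp']] := cycle_dist_descent n_i lt_pi lt_gate neq_pg.
    by exists p'; split=> //; lia.
  have lt_i1m : i.+1 < m by lia.
  right; split=> //; have [n_i1 _] := n_rad lt_i1m.
  rewrite cycle_dist_refl add0n in D_gt0 *.
  case: (ltngtP i.+1 j) => [lt_i1j|?|eq_i1j]; last first; try lia.
    rewrite -eq_i1j chain_span_nil /= in D_gt0 *; rewrite -eq_i1j in lt_qj.
    have neq_0q : 0 != q by apply/eqP => q0; rewrite -q0 cycle_dist_refl in D_gt0.
    have [p' [lt_p' adj_p' Dp']] := cycle_dist_descent n_i1 (n_gt0 lt_i1m) lt_qj neq_0q.
    by exists p'; rewrite add0n.
  rewrite chain_span_cons // in D_gt0 *.
  have [p' [lt_p' adj_p' Dp']] :=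
    cycle_dist_descent n_i1 (n_gt0 lt_i1m) (gate_lt lt_i1m) (isT : 0 != gate i.+1).
  by exists p'; split=> //; rewrite cycle_dist_gate // in Dp'; lia.
- move=> D_gt0; left; have neq_p0 : p != 0 by move: canon_p; lia.
  have [p' [lt_p'i adj_pp' Dp']] := cycle_dist_descent n_i lt_pi (n_gt0 lt_im) neq_p0.
  by exists p'; split=> //; rewrite (cycle_distC _ 0 p) (cycle_distC _ 0 p'); lia.
- move=> D_gt0; rewrite -eq_ij in lt_qj; left.
  have neq_pq : p != q by apply/eqP => eq_pq; rewrite eq_pq cycle_dist_refl in D_gt0.
  have [p' [lt_p'i adj_pp' Dp']] := cycle_dist_descent n_i lt_pi lt_qj neq_pq.
  by exists p'.
Qed.

End ChainLabels.

(* A vertex is a canonical raw vertex (i, p); raw vertices that the chain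
   identifies are at the same distance from everything. *)
Section ChainGraph.

Variables (m : nat) (n : nat -> nat).
Hypothesis n_odd : forall i, i < m -> odd (n i) /\ 5 <= n i.

Local Notation raw := (raw_vert m n).
Local Notation V := (chain_vert m n).
Local Notation rad := (rad n).
Local Notation gate := (gate n).
Local Notation canon_label := (canon_label m n).

Definition raw_dist (a b : raw) := chain_dist n a.1 a.2 b.1 b.2.

Definition vdist (x y : V) := raw_dist (val x) (val y).

Lemma n_le_chainK i : i < m -> n i <= chainK m n.
Proof. by move=> lt_im; apply: (leq_bigmax (F := fun j : 'I_m => n j) (Ordinal lt_im)). Qed.

Definition raw_of_label i p (lt_im : i < m) (lt_pi : p < n i) : raw :=
  (Ordinal lt_im, Ordinal (leq_trans lt_pi (n_le_chainK lt_im))).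

Lemma canonical_vertE (a : raw) : canonical_vert a = canon_label a.1 a.2.
Proof. by rewrite /canonical_vert /canon_label /raw_valid ltn_ord. Qed.

Lemma canon_labelP (x : V) : canon_label (val x).1 (val x).2.
Proof. by rewrite -canonical_vertE; apply: valP. Qed.

Lemma raw_validP (x : V) : raw_valid (val x).
Proof. by case/andP: (valP x). Qed.

Lemma raw_eq (a b : raw) : (a.1 = b.1 :> nat) -> (a.2 = b.2 :> nat) -> a = b.
Proof. by case: a b => [a1 a2] [b1 b2] /= /val_inj -> /val_inj ->. Qed.

Lemma vert_of_label i p :
  canon_label i p -> exists x : V, (val x).1 = i :> nat /\ (val x).2 = p :> nat.
Proof.
move=> canon_ip; have /and3P [lt_im lt_pi _] := canon_ip.
have canon : canonical_vert (raw_of_label lt_im lt_pi) by rewrite canonical_vertE.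
by exists (exist _ (raw_of_label lt_im lt_pi) canon).
Qed.

Lemma identE (a b : raw) : ident a b =
  [&& (b.1 == a.1.+1 :> nat), (a.2 == gate a.1 :> nat) & (b.2 == 0 :> nat)].
Proof. by rewrite /ident (gateE n_odd (ltn_ord _)). Qed.

Lemma raw_dist_ident (a b y : raw) :
  raw_valid y -> ident a b -> raw_dist a y = raw_dist b y.
Proof.
rewrite identE /raw_valid => valid_y /and3P [/eqP b1 /eqP a2 /eqP b2].
have lt_a1m : (a.1).+1 < m by rewrite -b1 ltn_ord.
by rewrite /raw_dist b1 a2 b2 (chain_dist_gate n_odd).
Qed.

Lemma raw_dist_same (a b y : raw) :
  raw_valid y -> same_vert a b -> raw_dist a y = raw_dist b y.
Proof.
move=> valid_y /or3P [/eqP ->|ident_ab|ident_ba] //; first exact: raw_dist_ident.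
by rewrite (raw_dist_ident valid_y ident_ba).
Qed.

Lemma vert_of_raw (b : raw) : raw_valid b -> exists z : V, same_vert (val z) b.
Proof.
move=> valid_b.
case: (boolP ((0 < b.1) && (b.2 == 0 :> nat))) => [/andP [b1_gt0 b2_0]|canon_b].
  have lt_im : (b.1).-1 < m by have := ltn_ord b.1; lia.
  have canon_a : canonical_vert (raw_of_label lt_im (gate_lt n_odd lt_im)).
    by rewrite canonical_vertE /= /canon_label lt_im (gate_lt n_odd lt_im) /gate andbF.
  exists (exist _ (raw_of_label lt_im (gate_lt n_odd lt_im)) canon_a); apply/or3P/Or32.
  by rewrite identE /= b2_0 eqxx andbT; apply/eqP; lia.
have canon : canonical_vert b by rewrite /canonical_vert valid_b canon_b.
by exists (exist _ b canon); rewrite /same_vert eqxx.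
Qed.

Lemma vdistC x y : vdist x y = vdist y x.
Proof. exact: chain_distC. Qed.

Lemma vdist_refl x : vdist x x = 0.
Proof. exact: chain_dist_refl. Qed.

Lemma vdist_eq0 x y : vdist x y = 0 -> x = y.
Proof.
move=> /(chain_dist_eq0 n_odd (canon_labelP x) (canon_labelP y)) [eq1 eq2].
exact/val_inj/raw_eq.
Qed.

Lemma vdist_adj x z y : chain_adj x z -> vdist x y <= (vdist z y).+1.
Proof.
case/existsP=> a /existsP [b /and3P [same_xa same_zb]].
case/and4P=> /eqP eq_ab valid_a valid_b adj_ab.
rewrite /vdist (raw_dist_same (raw_validP y) same_xa) (raw_dist_same (raw_validP y) same_zb).
rewrite /raw_dist -eq_ab; apply: (chain_dist_adj n_odd) => //; rewrite ?eq_ab //.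
exact: raw_validP.
Qed.

Lemma chain_adj_of_raw (x z : V) (a b : raw) :
  same_vert (val x) a -> same_vert (val z) b -> raw_adj a b -> chain_adj x z.
Proof.
move=> same_xa same_zb adj_ab.
by apply/existsP; exists a; apply/existsP; exists b; apply/and3P.
Qed.

Lemma step_in_cycle (x : V) (a : raw) p' (lt_p' : p' < n a.1) :
  same_vert (val x) a -> raw_valid a -> cycle_adj (n a.1) a.2 p' ->
  exists2 z : V, chain_adj x z &
    forall y, vdist z y = raw_dist (raw_of_label (ltn_ord a.1) lt_p') (val y).
Proof.
move=> same_xa valid_a adj_a.
have [z same_zb] := vert_of_raw (lt_p' : raw_valid (raw_of_label (ltn_ord a.1) lt_p')).
exists z; last by move=> y; rewrite /vdist (raw_dist_same (raw_validP y) same_zb).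
by apply: chain_adj_of_raw same_xa same_zb _; apply/and4P; split=> //; apply/eqP/val_inj.
Qed.

Lemma vdist_descent x y : x != y -> exists2 z, chain_adj x z & (vdist z y).+1 = vdist x y.
Proof.
move=> neq_xy.
have D_gt0 : 0 < vdist x y by rewrite lt0n; apply: contra neq_xy => /eqP /vdist_eq0 ->.
have /and3P [lt_jm lt_qj _] := canon_labelP y.
case: (chain_dist_descent n_odd (canon_labelP x) lt_jm lt_qj D_gt0).
  case=> p' [lt_p' adj_p' Dp'].
  have same_xx : same_vert (val x) (val x) by rewrite /same_vert eqxx.
  have [z adj_xz Dz] := @step_in_cycle x (val x) p' lt_p' same_xx (raw_validP x) adj_p'.
  by exists z; rewrite // Dz.
case=> lt_i1m gate_x [p' [lt_p' adj_p' Dp']].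
pose a := raw_of_label lt_i1m (n_gt0 n_odd lt_i1m).
have same_xa : same_vert (val x) a by apply/or3P/Or32; rewrite identE /= gate_x !eqxx.
have [z adj_xz Dz] := @step_in_cycle x a p' lt_p' same_xa (n_gt0 n_odd lt_i1m) adj_p'.
by exists z; rewrite // Dz.
Qed.

Corollary chain_srsP (W : {set V}) : strong_resolving_set (@chain_adj m n) W <->
  (forall x y, x != y -> mutually_maximally_distant (@chain_adj m n) vdist x y ->
    (x \in W) || (y \in W)).
Proof.
apply: strong_resolving_setP.
- exact: vdistC.
- exact: vdist_refl.
- exact: vdist_eq0.
- exact: vdist_adj.
- exact: vdist_descent.
Qed.

(* [off_gate i p]: position p of cycle i is not a cut vertex of the chain. *)
Definition off_gate i p := ~~ ((p == gate i) && (i.+1 < m)).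

Lemma off_gate_ne i p : p != gate i -> off_gate i p.
Proof. by rewrite /off_gate negb_and => ->. Qed.

Lemma off_gate_last p : off_gate m.-1 p.
Proof. by rewrite /off_gate negb_and; apply/orP; right; lia. Qed.

Lemma neighbour_in_cycle (x z y : V) i p :
  (val x).1 = i :> nat -> (val x).2 = p :> nat -> off_gate i p -> chain_adj x z ->
  exists2 p', p' < n i & vdist z y = chain_dist n i p' (val y).1 (val y).2.
Proof.
move=> x1 x2 off_p /existsP [a /existsP [b /and3P [same_xa same_zb]]].
have eq_xa : a = val x.
  case/or3P: same_xa => [/eqP -> //|ident_xa|ident_ax].
    move: ident_xa; rewrite identE => /and3P [/eqP a1 /eqP a2 _].
    by move: off_p; rewrite /off_gate -x1 -x2 a2 eqxx -a1 ltn_ord.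
  move: ident_ax (canon_labelP x); rewrite identE /canon_label.
  by case/and3P=> /eqP -> _ /eqP ->; lia.
rewrite -{}eq_xa in x1 x2 *; case/and4P=> /eqP eq_ab _ valid_b _.
exists b.2; first by move: valid_b; rewrite /raw_valid -eq_ab x1.
by rewrite /vdist (raw_dist_same (raw_validP y) same_zb) /raw_dist -eq_ab x1.
Qed.

Lemma mmd_of_labels (x y : V) i p j q :
  (val x).1 = i :> nat -> (val x).2 = p :> nat -> off_gate i p ->
  (val y).1 = j :> nat -> (val y).2 = q :> nat -> off_gate j q ->
  (forall p', p' < n i -> chain_dist n i p' j q <= chain_dist n i p j q) ->
  (forall q', q' < n j -> chain_dist n j q' i p <= chain_dist n j q i p) ->
  mutually_maximally_distant (@chain_adj m n) vdist x y.
Proof.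
move=> x1 x2 off_p y1 y2 off_q far_p far_q.
split=> z adj_z.
  have [p' lt_p' ->] := neighbour_in_cycle y x1 x2 off_p adj_z.
  by rewrite /vdist /raw_dist x1 x2 y1 y2 far_p.
have [q' lt_q' ->] := neighbour_in_cycle x y1 y2 off_q adj_z.
by rewrite /vdist /raw_dist x1 x2 y1 y2 far_q.
Qed.

Lemma mmd_same_cycle (x y : V) i p q :
  (val x).1 = i :> nat -> (val x).2 = p :> nat -> off_gate i p ->
  (val y).1 = i :> nat -> (val y).2 = q :> nat -> off_gate i q ->
  cycle_dist (n i) p q = rad i -> mutually_maximally_distant (@chain_adj m n) vdist x y.
Proof.
move=> x1 x2 off_p y1 y2 off_q dist_pq.
have lt_im : i < m by rewrite -x1 ltn_ord.
have [n_i _] := n_rad n_odd lt_im.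
have lt_pi : p < n i by rewrite -x1 -x2; case/andP: (valP x).
have lt_qi : q < n i by rewrite -y1 -y2; case/andP: (valP y).
have dist_qp : cycle_dist (n i) q p = rad i by rewrite cycle_distC.
apply: (mmd_of_labels x1 x2 off_p y1 y2 off_q) => r lt_ri;
  by rewrite /chain_dist eqxx ?dist_pq ?dist_qp (cycle_dist_le n_i).
Qed.

Lemma mmd_cross_cycles (x y : V) i p j q :
  (val x).1 = i :> nat -> (val x).2 = p :> nat -> off_gate i p ->
  (val y).1 = j :> nat -> (val y).2 = q :> nat -> off_gate j q -> i < j ->
  cycle_dist (n i) p (gate i) = rad i -> cycle_dist (n j) 0 q = rad j ->
  mutually_maximally_distant (@chain_adj m n) vdist x y.
Proof.
move=> x1 x2 off_p y1 y2 off_q lt_ij dist_p dist_q.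
have lt_jm : j < m by rewrite -y1 ltn_ord.
have lt_im : i < m by lia.
have [n_i _] := n_rad n_odd lt_im; have [n_j _] := n_rad n_odd lt_jm.
apply: (mmd_of_labels x1 x2 off_p y1 y2 off_q) => r lt_r; rewrite /chain_dist.
  rewrite (ltn_eqF lt_ij) lt_ij dist_p dist_q.
  by have := cycle_dist_le n_i lt_r (gate_lt n_odd lt_im); lia.
rewrite (gtn_eqF lt_ij) ltnNge (ltnW lt_ij) /= dist_p dist_q.
by have := cycle_dist_le n_j (n_gt0 n_odd lt_jm) lt_r; lia.
Qed.

Lemma not_maximally_distant (x y : V) i p j q :
  (val x).1 = i :> nat -> (val x).2 = p :> nat ->
  (val y).1 = j :> nat -> (val y).2 = q :> nat ->
  (i < j /\ 2 <= p <= gate i) \/ (i = j /\ 1 <= p < q /\ q - p < rad i) ->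
  ~ maximally_distant (@chain_adj m n) vdist x y.
Proof.
move=> x1 x2 y1 y2 pos max_x.
have lt_im : i < m by rewrite -x1 ltn_ord.
have [n_i ge2_rad] := n_rad n_odd lt_im.
have lt_pi : p < n i by rewrite -x1 -x2; case/andP: (valP x).
have adj_prev : cycle_adj (n (val x).1) (val x).2 p.-1.
  by rewrite x1 x2 cycle_adjE; lia.
have lt_prev : p.-1 < n (val x).1 by rewrite x1; lia.
have [z adj_xz Dz] := @step_in_cycle x (val x) p.-1 lt_prev
  (ltac:(by rewrite /same_vert eqxx)) (raw_validP x) adj_prev.
have := max_x z adj_xz; rewrite Dz /vdist /raw_dist /= x1 x2 y1 y2 /chain_dist.
case: pos => [[lt_ij p_range]|[<- [p_range q_range]]].
  by rewrite (ltn_eqF lt_ij) lt_ij /cycle_dist /gate in p_range *; lia.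
by rewrite eqxx /cycle_dist; lia.
Qed.

End ChainGraph.

Lemma leq_sum_nat a b (F G : nat -> nat) : (forall i, a <= i < b -> F i <= G i) ->
  \sum_(a <= i < b) F i <= \sum_(a <= i < b) G i.
Proof.
move=> le_FG; rewrite big_nat_cond [leqRHS]big_nat_cond.
by apply: leq_sum => i /andP [/le_FG].
Qed.

Lemma sum_nat_ge_size a b (F : nat -> nat) : (forall i, a <= i < b -> 0 < F i) ->
  b - a <= \sum_(a <= i < b) F i.
Proof. by move=> F_gt0; rewrite -[b - a]muln1 -sum_nat_const_nat; apply: leq_sum_nat. Qed.

Lemma leq_term_sum_nat a b p (F : nat -> nat) : a <= p < b -> F p <= \sum_(a <= i < b) F i.
Proof.
case/andP=> le_ap lt_pb; rewrite (big_cat_nat le_ap (ltnW lt_pb)) /= [X in _ + X]big_ltn //; lia.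
Qed.

Lemma leq_two_terms_sum_nat a b p q (F : nat -> nat) : a <= p < q -> q < b ->
  F p + F q <= \sum_(a <= i < b) F i.
Proof.
case/andP=> le_ap lt_pq lt_qb; rewrite (@big_cat_nat _ _ _ q) /=; [|lia|lia].
by rewrite leq_add // leq_term_sum_nat //; apply/andP.
Qed.

Lemma count_interval N a b : \sum_(0 <= p < N) ((a <= p) && (p < b) : nat) = minn b N - minn a N.
Proof.
elim: N => [|N IHN]; first by rewrite big_geq //; lia.
by rewrite big_nat_recr //= IHN; case: (leqP a N); case: (ltnP N b) => /=; lia.
Qed.

Lemma sum_pairs_ge (f : nat -> nat) N lo hi s :
  lo <= hi <= lo + s -> hi + s <= N ->
  (forall j, lo <= j < hi -> 0 < f j + f (j + s)) ->
  hi - lo + (\sum_(0 <= p < lo) f p + \sum_(hi <= p < lo + s) f p)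
    <= \sum_(0 <= p < N) f p.
Proof.
case/andP=> le_lohi le_hi_los le_N pairs_pos.
rewrite (@big_cat_nat _ _ _ lo 0 N) ?(@big_cat_nat _ _ _ hi lo N)
  ?(@big_cat_nat _ _ _ (lo + s) hi N) ?(@big_cat_nat _ _ _ (hi + s) (lo + s) N);
  [idtac|lia..].
rewrite big_addn addnK.
have := sum_nat_ge_size pairs_pos; rewrite big_split /=; lia.
Qed.

Lemma half_graph_cover m (x y : nat -> bool) (g : nat -> nat) : 0 < m ->
  (forall i j, i < j < m -> x i || y j) ->
  (forall i, i < m.-1 -> x i <= g i) ->
  (forall i, 0 < i < m -> y i <= g i) ->
  m.-1 <= \sum_(0 <= i < m) g i.
Proof.
move=> m_gt0 cover_xy x_g y_g.
have [f [lt_fm g_pos]] : exists f, f < m /\ forall i, i < m -> i != f -> 0 < g i.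
  case: (boolP [exists i : 'I_m.-1, ~~ x i]) => [ex_nx|all_x].
    have ex_nx' : exists i, (i < m.-1) && ~~ x i.
      by case/existsP: ex_nx => i nx_i; exists i; rewrite ltn_ord.
    case: (ex_minnP ex_nx') => f /andP [lt_f nx_f] min_f.
    exists f; split=> [|i lt_im neq_if]; first lia.
    case: (ltngtP i f) => [lt_if|lt_fi|eq_if]; last by rewrite eq_if eqxx in neq_if.
      have x_i : x i by apply/negPn/negP => nx_i; have := min_f i; rewrite nx_i andbT; lia.
      by have := x_g i (ltac:(lia)); rewrite x_i.
    have := cover_xy f i (ltac:(lia)); rewrite (negbTE nx_f) /= => y_i.
    by have := y_g i (ltac:(lia)); rewrite y_i.
  exists m.-1; split=> [|i lt_im neq_i]; first lia.
  have lt_i : i < m.-1 by lia.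
  have x_i : x i by move/existsPn: all_x => /(_ (Ordinal lt_i)); rewrite negbK.
  by have := x_g i lt_i; rewrite x_i.
rewrite (@big_cat_nat _ _ _ f 0 m) /=; [rewrite [X in _ + X]big_ltn //|lia..].
have := @sum_nat_ge_size 0 f g (ltac:(move=> i ?; apply: g_pos; lia)).
have := @sum_nat_ge_size f.+1 m g (ltac:(move=> i ?; apply: g_pos; lia)).
lia.
Qed.

Section CountByLabels.

Variables (m : nat) (n : nat -> nat).

Local Notation V := (chain_vert m n).

Definition has_label (W : {set V}) i p : bool :=
  [exists x in W, ((val x).1 == i :> nat) && ((val x).2 == p :> nat)].

Lemma has_labelE (W : {set V}) (x : V) i p :
  (val x).1 = i :> nat -> (val x).2 = p :> nat -> has_label W i p = (x \in W).
Proof.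
move=> x1 x2; apply/existsP/idP => [[x' /andP [x'_W /andP [/eqP x'1 /eqP x'2]]]|x_W].
  by have -> : x = x' by apply/val_inj/raw_eq; rewrite ?x1 ?x2 ?x'1 ?x'2.
by exists x; rewrite x_W x1 x2 !eqxx.
Qed.

Lemma has_label_lt (W : {set V}) i p : has_label W i p -> p < n i.
Proof.
case/existsP=> x /andP [_ /andP [/eqP <- /eqP <-]].
by case/andP: (valP x).
Qed.

Lemma card_by_labels (W : {set V}) :
  #|W| = \sum_(0 <= i < m) \sum_(0 <= p < n i) has_label W i p.
Proof.
rewrite -(card_imset W val_inj) -sum1_card big_mkcond /=.
have -> : \sum_(a : raw_vert m n) (if a \in [set val x | x in W] then 1 else 0) =
          \sum_(i : 'I_m) \sum_(p : 'I_(chainK m n)) (has_label W i p : nat).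
  rewrite pair_big /=; apply: eq_bigr => [[i p]] _ /=.
  case: (boolP ((i, p) \in [set val x | x in W])) => [/imsetP [x x_W eq_x]|not_in].
    by rewrite (has_labelE W (x := x)) ?x_W // -eq_x.
  case: (boolP (has_label W i p)) => // /existsP [x /andP [x_W /andP [/eqP x1 /eqP x2]]].
  by case/negP: not_in; apply/imsetP; exists x => //; apply: raw_eq.
rewrite -(big_mkord xpredT (fun i => \sum_(p < chainK m n) (has_label W i p : nat))).
apply: eq_big_nat => i /andP [_ lt_im].
rewrite -(big_mkord xpredT (fun p => (has_label W i p : nat))).
rewrite (@big_cat_nat _ _ _ (n i)) //= ?n_le_chainK // [X in _ + X]big1_seq ?addn0 //.
move=> p /andP [_]; rewrite mem_index_iota.
by case: (boolP (has_label W i p)) => // /has_label_lt; lia.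
Qed.

End CountByLabels.

Section LowerBound.

Variables (m : nat) (n : nat -> nat).
Hypothesis m_ge2 : 2 <= m.
Hypothesis n_odd : forall i, i < m -> odd (n i) /\ 5 <= n i.

Local Notation V := (chain_vert m n).
Local Notation rad := (rad n).
Local Notation gate := (gate n).
Local Notation canon_label := (canon_label m n).
Local Notation off_gate := (off_gate m n).

Variable W : {set V}.
Hypothesis W_srs : strong_resolving_set (@chain_adj m n) W.

Local Notation has := (has_label W).

Lemma cover_antipodal i p q : i < m -> (0 < i -> 0 < p) -> p < q < n i ->
  rad i <= q - p <= (rad i).+1 -> off_gate i p -> off_gate i q -> has i p || has i q.
Proof.
move=> lt_im pos_p range_pq dist_pq off_p off_q.
have [n_i _] := n_rad n_odd lt_im.
have [x [x1 x2]] := vert_of_label (@canon_labelI m n i p lt_im (ltac:(lia)) pos_p).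
have [y [y1 y2]] := vert_of_label (@canon_labelI m n i q lt_im (ltac:(lia)) (ltac:(lia))).
have neq_xy : x != y.
  by apply: contraTneq range_pq => eq_xy; move: x2; rewrite eq_xy y2; lia.
have mmd_xy :=
  mmd_same_cycle n_odd x1 x2 off_p y1 y2 off_q (ltac:(rewrite /cycle_dist; lia)).
by rewrite (has_labelE W x1 x2) (has_labelE W y1 y2); apply: (chain_srsP n_odd W).1.
Qed.

Lemma cover_cross i p j q : i < j < m -> p <= 1 -> (0 < i -> 0 < p) ->
  rad j <= q <= (rad j).+1 -> off_gate j q -> has i p || has j q.
Proof.
move=> lt_ijm le_p1 pos_p range_q off_q.
have lt_im : i < m by lia. have lt_jm : j < m by lia.
have [n_i ge2_i] := n_rad n_odd lt_im; have [n_j ge2_j] := n_rad n_odd lt_jm.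
have [x [x1 x2]] := vert_of_label (@canon_labelI m n i p lt_im (ltac:(lia)) pos_p).
have [y [y1 y2]] := vert_of_label (@canon_labelI m n j q lt_jm (ltac:(lia)) (ltac:(lia))).
have neq_xy : x != y.
  by apply: contraTneq lt_ijm => eq_xy; move: x1; rewrite eq_xy y1; lia.
have off_p : off_gate i p by apply: off_gate_ne; rewrite /gate; lia.
have mmd_xy := mmd_cross_cycles n_odd x1 x2 off_p y1 y2 off_q (ltac:(lia))
  (ltac:(rewrite /cycle_dist /gate; lia)) (ltac:(rewrite /cycle_dist; lia)).
by rewrite (has_labelE W x1 x2) (has_labelE W y1 y2); apply: (chain_srsP n_odd W).1.
Qed.

Lemma cycle_pairs_bound i lo hi s : i < m -> (0 < i -> 0 < lo) ->
  lo <= hi <= lo + s -> hi + s <= n i -> rad i <= s <= (rad i).+1 ->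
  (forall j, lo <= j < hi -> off_gate i j && off_gate i (j + s)) ->
  hi - lo + (\sum_(0 <= p < lo) has i p + \sum_(hi <= p < lo + s) has i p)
    <= \sum_(0 <= p < n i) has i p.
Proof.
move=> lt_im pos_lo range_hi le_n range_s off_pairs.
apply: sum_pairs_ge => // j range_j; have /andP [off_j off_js] := off_pairs j range_j.
have := @cover_antipodal i j (j + s) lt_im (ltac:(lia)) (ltac:(lia)) (ltac:(lia)) off_j off_js.
by case: (has i j); case: (has i (j + s)).
Qed.

Lemma first_cycle_bound : rad 0 + (has 0 0 && has 0 1) <= \sum_(0 <= p < n 0) has 0 p.
Proof.
have lt_0m : 0 < m by lia.
have [n_0 ge2_rad] := n_rad n_odd lt_0m.
have off_ne p : p != gate 0 -> off_gate 0 p by apply: off_gate_ne.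
case: (boolP (has 0 0 && has 0 1)) => [/andP [has0 has1]|not_both].
  have := @cycle_pairs_bound 0 2 (rad 0).+1 (rad 0) lt_0m (ltac:(lia)) (ltac:(lia))
    (ltac:(lia)) (ltac:(lia)) (fun j _ => ltac:(rewrite !off_ne /gate //; lia)).
  have := @leq_two_terms_sum_nat 0 2 0 1 (has 0) isT isT; rewrite has0 has1; lia.
have := @cycle_pairs_bound 0 1 (rad 0) (rad 0).+1 lt_0m (ltac:(lia)) (ltac:(lia))
  (ltac:(lia)) (ltac:(lia)) (fun j _ => ltac:(rewrite !off_ne /gate //; lia)).
have := @cover_antipodal 0 0 (rad 0) lt_0m (ltac:(lia)) (ltac:(lia)) (ltac:(lia))
  (ltac:(rewrite off_ne /gate //; lia)) (ltac:(rewrite off_ne /gate //; lia)).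
have := @leq_term_sum_nat (rad 0) (1 + (rad 0).+1) (rad 0) (has 0) (ltac:(lia)).
rewrite big_nat1; case: (has 0 0) not_both; case: (has 0 (rad 0)) => /=; lia.
Qed.

Lemma middle_cycle_bound i : 0 < i < m.-1 ->
  rad i - 1 + (has i 1 || has i (rad i)) <= \sum_(0 <= p < n i) has i p.
Proof.
move=> range_i; have lt_im : i < m by lia.
have [n_i ge2_rad] := n_rad n_odd lt_im.
have off_ne p : p != gate i -> off_gate i p by apply: off_gate_ne.
case: (boolP (has i 1)) => [has1|_] /=.
  have := @cycle_pairs_bound i 2 (rad i).+1 (rad i) lt_im (ltac:(lia)) (ltac:(lia))
    (ltac:(lia)) (ltac:(lia)) (fun j _ => ltac:(rewrite !off_ne /gate //; lia)).
  have := @leq_term_sum_nat 0 2 1 (has i) isT; rewrite has1; lia.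
have := @cycle_pairs_bound i 1 (rad i) (rad i).+1 lt_im (ltac:(lia)) (ltac:(lia))
  (ltac:(lia)) (ltac:(lia)) (fun j _ => ltac:(rewrite !off_ne /gate //; lia)).
have := @leq_term_sum_nat (rad i) (1 + (rad i).+1) (rad i) (has i) (ltac:(lia)); lia.
Qed.

Lemma last_cycle_bound :
  rad m.-1 + (has m.-1 (rad m.-1) && has m.-1 (gate m.-1))
    <= \sum_(0 <= p < n m.-1) has m.-1 p.
Proof.
set l := m.-1; have lt_lm : l < m by rewrite /l; lia.
have [n_l ge2_rad] := n_rad n_odd lt_lm.
have off_l : forall p, off_gate l p := off_gate_last m n.
case: (boolP (has l (rad l) && has l (gate l))) => [/andP [has_rad has_gate]|_].
  have := @cycle_pairs_bound l 1 (rad l) (rad l).+1 lt_lm (ltac:(lia)) (ltac:(lia))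
    (ltac:(lia)) (ltac:(lia)) (fun j _ => ltac:(by rewrite !off_l)).
  have := @leq_two_terms_sum_nat (rad l) (1 + (rad l).+1) (rad l) (gate l) (has l)
    (ltac:(rewrite /gate; lia)) (ltac:(rewrite /gate; lia)).
  rewrite has_rad has_gate; lia.
have := @cycle_pairs_bound l 1 (rad l).+1 (rad l) lt_lm (ltac:(lia)) (ltac:(lia))
  (ltac:(lia)) (ltac:(lia)) (fun j _ => ltac:(by rewrite !off_l)).
lia.
Qed.

(* [left_bit i]: W contains the positions of cycle i antipodal to its gate;
   [right_bit j]: W contains the positions of cycle j antipodal to its
   position 0 that are not cut vertices. *)
Definition left_bit i := if i == 0 then has 0 0 && has 0 1 else has i 1.

Definition right_bit j :=
  if j == m.-1 then has j (rad j) && has j (gate j) else has j (rad j).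

Lemma cross_bits i j : i < j < m -> left_bit i || right_bit j.
Proof.
move=> lt_ijm; have lt_jm : j < m by lia.
have [_ ge2_rad] := n_rad n_odd lt_jm.
have off_rad : off_gate j (rad j) by apply: off_gate_ne; rewrite /gate; lia.
have cover_rad p : p <= 1 -> (0 < i -> 0 < p) -> has i p || has j (rad j).
  by move=> le_p1 pos_p; apply: (cover_cross lt_ijm le_p1 pos_p _ off_rad); lia.
have cover_gate p : j = m.-1 -> p <= 1 -> (0 < i -> 0 < p) -> has i p || has j (gate j).
  move=> j_last le_p1 pos_p; have off_g : off_gate j (gate j) by rewrite j_last off_gate_last.
  by apply: (cover_cross lt_ijm le_p1 pos_p _ off_g); rewrite /gate; lia.
rewrite /left_bit /right_bit; case: eqP => [i0|i_gt0]; case: eqP => [j_last|j_mid].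
- move: (cover_rad 0 isT (ltac:(lia))) (cover_rad 1 isT (ltac:(lia))).
  move: (cover_gate 0 j_last isT (ltac:(lia))) (cover_gate 1 j_last isT (ltac:(lia))).
  by rewrite i0; case: (has 0 0); case: (has 0 1); case: (has j (rad j)); case: (has j _).
- move: (cover_rad 0 isT (ltac:(lia))) (cover_rad 1 isT (ltac:(lia))).
  by rewrite i0; case: (has 0 0); case: (has 0 1); case: (has j (rad j)).
- move: (cover_rad 1 isT (ltac:(lia))) (cover_gate 1 j_last isT (ltac:(lia))).
  by case: (has i 1); case: (has j (rad j)); case: (has j (gate j)).
- exact: (cover_rad 1 isT (ltac:(lia))).
Qed.

Definition cycle_base i := if i == 0 then rad 0 else if i == m.-1 then rad i else rad i - 1.

Definition cycle_bit i :=
  if i == 0 then left_bit 0 else if i == m.-1 then right_bit i else left_bit i || right_bit i.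

Lemma cycle_bound i : i < m -> cycle_base i + cycle_bit i <= \sum_(0 <= p < n i) has i p.
Proof.
move=> lt_im; rewrite /cycle_base /cycle_bit /left_bit /right_bit.
case: eqP => [->|i_gt0]; first exact: first_cycle_bound.
case: eqP => [->|i_mid]; first exact: last_cycle_bound.
by apply: middle_cycle_bound; lia.
Qed.

Lemma sum_cycle_base : \sum_(0 <= i < m) cycle_base i =
  (n 0)./2 + (n m.-1)./2 + \sum_(1 <= i < m.-1) (n i - 2)./2.
Proof.
rewrite (@big_cat_nat _ _ _ 1 0 m) ?(@big_cat_nat _ _ _ m.-1 1 m) /=; [|lia..].
have -> : \sum_(m.-1 <= i < m) cycle_base i = cycle_base m.-1.
  by rewrite big_ltn ?big_geq ?addn0; lia.
have -> : \sum_(1 <= i < m.-1) cycle_base i = \sum_(1 <= i < m.-1) (n i - 2)./2.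
  apply: (@eq_big_nat nat 0 addn) => i range_i.
  have [n_i ge2_rad] := n_rad n_odd (ltac:(lia) : i < m).
  rewrite /cycle_base; have -> : (i == 0) = false by lia.
  have -> : (i == m.-1) = false by lia.
  rewrite n_i (_ : 2 * rad i + 1 - 2 = true + (rad i - 1).*2); last by rewrite -mul2n /=; lia.
  by rewrite half_bit_double.
rewrite big_nat1 /cycle_base !eqxx (_ : (m.-1 == 0) = false) /rad; [lia|lia].
Qed.

Lemma sum_cycle_bit : m.-1 <= \sum_(0 <= i < m) cycle_bit i.
Proof.
apply: (half_graph_cover (x := left_bit) (y := right_bit)); first lia.
- by move=> i j; apply: cross_bits.
- move=> i lt_i; rewrite /cycle_bit; case: eqP => [->|_] //.
  by rewrite (_ : (i == m.-1) = false) //; [case: left_bit | lia].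
- move=> i range_i; rewrite /cycle_bit (_ : (i == 0) = false); last lia.
  by case: eqP => [->|_] //; case: left_bit; case: right_bit.
Qed.

Theorem sdim_lower_bound :
  m - 1 + (n 0)./2 + (n m.-1)./2 + \sum_(1 <= i < m.-1) (n i - 2)./2 <= #|W|.
Proof.
have bound := leq_sum_nat (fun i (range_i : 0 <= i < m) => cycle_bound (ltac:(lia) : i < m)).
rewrite big_split /= sum_cycle_base in bound.
by rewrite card_by_labels; have := sum_cycle_bit; lia.
Qed.

End LowerBound.

Section UpperBound.

Variables (m : nat) (n : nat -> nat).
Hypothesis m_ge2 : 2 <= m.
Hypothesis n_odd : forall i, i < m -> odd (n i) /\ 5 <= n i.

Local Notation V := (chain_vert m n).
Local Notation rad := (rad n).
Local Notation gate := (gate n).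
Local Notation canon_label := (canon_label m n).

Definition in_basis i p :=
  if i == 0 then (p <= 1) || (gate i < p)
  else if i == m.-1 then gate i <= p else (p == 1) || (gate i < p).

Definition basis : {set V} := [set x : V | in_basis (val x).1 (val x).2].

Lemma has_label_basis i p : has_label basis i p = canon_label i p && in_basis i p.
Proof.
case: (boolP (canon_label i p)) => [canon_ip|not_canon] /=.
  by have [x [x1 x2]] := vert_of_label canon_ip; rewrite (has_labelE _ x1 x2) inE x1 x2.
apply/negbTE/negP => /existsP [x /andP [_ /andP [/eqP x1 /eqP x2]]].
by case/negP: not_canon; rewrite -x1 -x2 -canonical_vertE; apply: valP.
Qed.

Lemma basis_cycle_count i : i < m ->
  \sum_(0 <= p < n i) has_label basis i p = cycle_base m n i + (i < m.-1).
Proof.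
move=> lt_im; have [n_i ge2_rad] := n_rad n_odd lt_im.
have labelE p : p < n i -> has_label basis i p = ~~ ((0 < i) && (p == 0)) && in_basis i p.
  by move=> lt_pi; rewrite has_label_basis /canon_label lt_im lt_pi.
rewrite /cycle_base; case: eqP => [i0|i_gt0].
  subst i; rewrite (@eq_big_nat nat 0 addn 0 (n 0) _ (fun p =>
    ((0 <= p) && (p < 2) : nat) + (((rad 0).+2 <= p) && (p < n 0) : nat))); last first.
    by move=> p range_p; rewrite labelE /in_basis /gate /=; lia.
  by rewrite big_split !count_interval /=; lia.
have i0F : (i == 0) = false by apply/negbTE/eqP.
case: eqP => [i_last|i_mid].
  rewrite (@eq_big_nat nat 0 addn 0 (n i) _ (fun p => (((rad i).+1 <= p) && (p < n i) : nat))).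
    by rewrite count_interval; lia.
  move=> p range_p; rewrite labelE /in_basis /gate; last lia.
  by rewrite i0F (introT eqP i_last) /=; lia.
rewrite (@eq_big_nat nat 0 addn 0 (n i) _ (fun p =>
  ((1 <= p) && (p < 2) : nat) + (((rad i).+2 <= p) && (p < n i) : nat))); last first.
  move=> p range_p; rewrite labelE /in_basis /gate; last lia.
  have ilastF : (i == m.-1) = false by apply/negbTE/eqP.
  by rewrite i0F ilastF /=; lia.
by rewrite big_split !count_interval /=; lia.
Qed.

Lemma card_basis :
  #|basis| = m - 1 + (n 0)./2 + (n m.-1)./2 + \sum_(1 <= i < m.-1) (n i - 2)./2.
Proof.
rewrite card_by_labels (@eq_big_nat nat 0 addn 0 m _
  (fun i => cycle_base m n i + ((0 <= i) && (i < m.-1) : nat))).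
  by rewrite big_split (sum_cycle_base m_ge2 n_odd) count_interval /=; lia.
by move=> i /andP [_ lt_im]; rewrite basis_cycle_count.
Qed.

Lemma not_in_basis i p : canon_label i p -> ~~ in_basis i p ->
  (i < m.-1 /\ 2 <= p <= gate i) \/ (i = m.-1 /\ 1 <= p <= rad i).
Proof.
rewrite /canon_label /in_basis /gate => /and3P [lt_im lt_pi canon_ip].
by case: eqP => [i0|i_gt0]; [|case: eqP => [i_last|i_mid]]; lia.
Qed.

(* No two vertices outside the basis are mutually maximally distant. *)
Lemma basis_srs : strong_resolving_set (@chain_adj m n) basis.
Proof.
apply/(chain_srsP n_odd) => x y neq_xy [max_x max_y].
apply/negPn/negP; rewrite negb_or !inE => /andP [out_x out_y].
move: (not_in_basis (canon_labelP x) out_x) (not_in_basis (canon_labelP y) out_y).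
case: x y neq_xy max_x max_y {out_x out_y} => [[i p] canon_x] [[j q] canon_y] /=.
move=> neq_xy max_x max_y; rewrite /gate => out_x out_y.
have lt_im : (i : nat) < m := ltn_ord i; have lt_jm : (j : nat) < m := ltn_ord j.
case: (ltngtP i j) => [lt_ij|lt_ji|eq_ij].
- apply: (not_maximally_distant n_odd erefl erefl erefl erefl _ max_x).
  by rewrite /gate /=; left; lia.
- apply: (not_maximally_distant n_odd erefl erefl erefl erefl _ max_y).
  by rewrite /gate /=; left; lia.
move/val_inj: eq_ij => eq_ij; subst j.
case: (ltngtP p q) => [lt_pq|lt_qp|eq_pq].
- apply: (not_maximally_distant n_odd erefl erefl erefl erefl _ max_x).
  by rewrite /gate /=; right; lia.
- apply: (not_maximally_distant n_odd erefl erefl erefl erefl _ max_y).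
  by rewrite /gate /=; right; lia.
by case/eqP: neq_xy; apply/val_inj/raw_eq.
Qed.

End UpperBound.

Theorem theorem3p8 (m : nat) (n : nat -> nat) :
  2 <= m ->
  (forall i, i < m -> odd (n i) /\ 5 <= n i) ->
  is_sdim (@chain_adj m n)
    (m - 1 + (n 0)./2 + (n m.-1)./2 + \sum_(1 <= i < m.-1) (n i - 2)./2).
Proof.
move=> m_ge2 n_odd; split; last by move=> W W_srs; apply: sdim_lower_bound.
by exists (basis m n); split; [exact: basis_srs | exact: card_basis].
Qed.
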